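(* Let $A\subseteq B$ be a ring extension (commutative rings with identity) with the finite character. Then every $B$-regular and locally finitely generated ideal of $A$ is finitely generated.
   Context: An $A$-submodule $S$ of $B$ is called $B$-regular if $SB=B$. The extension $A\subseteq B$ has the finite character if every $B$-regular ideal of $A$ is contained in only finitely many maximal ideals of $A$. An ideal $\mathfrak a$ of $A$ is locally finitely generated if $\mathfrak aA_{\mathfrak m}$ is a finitely generated ideal of $A_{\mathfrak m}$ for every maximal ideal $\mathfrak m$ of $A$. *)

From HB Require Import structures.
From mathcomp Require Import all_boot all_algebra.
Set Implicit Arguments.
Unset Strict Implicit.
Unset Printing Implicit Defensive.
Import GRing.Theory.
Local Open Scope ring_scope.

(* Ideals of a commutative ring are represented as predicates A -> Prop.
   Ring extension A ⊆ B is represented by an injective ring morphism f. *)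

Section Ideals.
Variable A : comPzRingType.

Definition is_ideal (I : A -> Prop) : Prop :=
  I 0 /\ (forall x y, I x -> I y -> I (x + y)) /\ (forall a x, I x -> I (a * x)).

Definition is_maximal_ideal (M : A -> Prop) : Prop :=
  is_ideal M /\ ~ M 1 /\
  forall J : A -> Prop, is_ideal J -> (forall x, M x -> J x) ->
    (forall x, J x <-> M x) \/ (forall x, J x).

Definition finitely_generated (I : A -> Prop) : Prop :=
  exists n (g : 'I_n -> A), (forall i, I (g i)) /\
    forall x, I x -> exists r : 'I_n -> A, x = \sum_(i < n) r i * g i.

(* ---- Localization A_m, encoded by fractions (a, s) with s outside m ---- *)
Definition frac := (A * A)%type.
Definition frac_one : frac := (1, 1).
Definition frac_zero : frac := (0, 1).
Definition frac_add (p q : frac) : frac := (p.1 * q.2 + q.1 * p.2, p.2 * q.2).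
Definition frac_mul (p q : frac) : frac := (p.1 * q.1, p.2 * q.2).

Definition in_loc (m : A -> Prop) (p : frac) : Prop := ~ m p.2.

Definition frac_eq (m : A -> Prop) (p q : frac) : Prop :=
  exists u, ~ m u /\ u * (p.1 * q.2 - q.1 * p.2) = 0.

Definition ext_ideal (m : A -> Prop) (I : A -> Prop) (p : frac) : Prop :=
  in_loc m p /\
  exists n (a : 'I_n -> A) (r : 'I_n -> frac),
    (forall i, I (a i)) /\ (forall i, in_loc m (r i)) /\
    frac_eq m p (\big[frac_add/frac_zero]_(i < n) frac_mul (a i, 1) (r i)).

Definition loc_finitely_generated (m : A -> Prop) (J : frac -> Prop) : Prop :=
  exists n (g : 'I_n -> frac), (forall i, J (g i)) /\
    forall p, J p -> exists r : 'I_n -> frac, (forall i, in_loc m (r i)) /\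
      frac_eq m p (\big[frac_add/frac_zero]_(i < n) frac_mul (r i) (g i)).

Definition locally_finitely_generated (I : A -> Prop) : Prop :=
  forall m, is_maximal_ideal m -> loc_finitely_generated m (ext_ideal m I).

End Ideals.

Section Extension.
Variables (A B : comPzRingType) (f : {rmorphism A -> B}).

(* S B = B, for the A-submodule S = f(I) of B *)
Definition B_regular (I : A -> Prop) : Prop :=
  forall y : B, exists n (s : 'I_n -> A) (b : 'I_n -> B),
    (forall i, I (s i)) /\ y = \sum_(i < n) f (s i) * b i.

Definition finite_character : Prop :=
  forall I : A -> Prop, is_ideal I -> B_regular I ->
    exists n (Ms : 'I_n -> (A -> Prop)),
      forall M, is_maximal_ideal M -> (forall x, I x -> M x) ->
        exists i, forall x, M x <-> Ms i x.

End Extension.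

(* Choose s_1, ..., s_n in I with 1 = sum f(s_i) b_i. The ideal J they generate is
   B-regular, so it lies in only finitely many maximal ideals M_1, ..., M_k, and for
   each M_j local finite generation provides a finite list L_j in I such that every
   x in I has u x in (L_j) for some u outside M_j. Let L = s ++ L_1 ++ ... ++ L_k and
   x in I. Every maximal ideal M contains an element u of (L : x) outside M: some s_i
   if M does not contain J, and the u given by L_j if M = M_j. Hence (L : x) is the
   unit ideal and x lies in (L). *)
From Pilot Require Import Defs.
From mathcomp Require Import all_boot all_algebra.
From mathcomp Require Import ring.
From mathcomp Require Import boolp classical_sets.
Set Implicit Arguments. Unset Strict Implicit. Unset Printing Implicit Defensive.
Import GRing.Theory.
Local Open Scope ring_scope.

Section Span.
Variable A : comPzRingType.
Implicit Types (L : seq A) (I : A -> Prop).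

Fixpoint in_span L (x : A) : Prop :=
  match L with
  | [::] => x = 0
  | a :: L' => exists c y, in_span L' y /\ x = c * a + y
  end.

Lemma in_span0 L : in_span L 0.
Proof. by elim: L => [|a L IH] //=; exists 0, 0; rewrite mul0r addr0. Qed.

Lemma in_spanD L x y : in_span L x -> in_span L y -> in_span L (x + y).
Proof.
elim: L x y => [|a L IH] x y /=; first by move=> -> ->; rewrite addr0.
move=> [c [x' [Lx' ->]]] [d [y' [Ly' ->]]].
by exists (c + d), (x' + y'); split; [exact: IH | ring].
Qed.

Lemma in_spanMl L c x : in_span L x -> in_span L (c * x).
Proof.
elim: L x => [|a L IH] x /=; first by move=> ->; rewrite mulr0.
move=> [d [x' [Lx' ->]]].
by exists (c * d), (c * x'); split; [exact: IH | ring].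
Qed.

Lemma is_ideal_span L : is_ideal (in_span L).
Proof. by split; [exact: in_span0 | split; [exact: in_spanD | exact: in_spanMl]]. Qed.

Lemma in_span_mem L a : a \in L -> in_span L a.
Proof.
elim: L => [|b L IH] //=; rewrite inE => /orP [/eqP ->|La].
  by exists 1, 0; rewrite mul1r addr0; split; first exact: in_span0.
by exists 0, a; rewrite mul0r add0r; split; first exact: IH.
Qed.

Lemma in_span_subset L L' x : {subset L <= L'} -> in_span L x -> in_span L' x.
Proof.
elim: L x => [|a L IH] x sLL' /=; first by move=> ->; exact: in_span0.
move=> [c [y [Ly ->]]]; apply: in_spanD.
  by apply/in_spanMl/in_span_mem/sLL'; rewrite inE eqxx.
by apply: IH Ly => z Lz; apply: sLL'; rewrite inE Lz orbT.
Qed.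

Lemma in_span_sum L x :
  in_span L x -> exists r : nat -> A, x = \sum_(i < size L) r i * L`_i.
Proof.
elim: L x => [|a L IH] x /=; first by move=> ->; exists (fun=> 0); rewrite big_ord0.
move=> [c [y [/IH [r ->] ->]]].
by exists (fun k => if k is k'.+1 then r k' else c); rewrite big_ord_recl.
Qed.

Lemma span_finitely_generated I L :
  (forall a, a \in L -> I a) -> (forall x, I x -> in_span L x) ->
  finitely_generated I.
Proof.
move=> LI IL; exists (size L), (fun i => L`_i); split; first by move=> i; exact/LI/mem_nth.
by move=> x /IL /in_span_sum [r ->]; exists (fun i => r i).
Qed.

End Span.

Section MaximalIdeals.
Variable A : comPzRingType.
Implicit Types (C J M : A -> Prop) (L : seq A).

Lemma maximal_ideal_mul_notin M u v :
  is_maximal_ideal M -> ~ M u -> ~ M v -> ~ M (u * v).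
Proof.
move=> [[M0 [MD MM]] [_ Mmax]] Mu Mv Muv.
pose J x := exists y a, M y /\ x = y + a * u.
have idJ : is_ideal J.
  split; first by exists 0, 0; rewrite mul0r addr0.
  split=> [x z [y [a [My ->]]] [y' [a' [My' ->]]] | b x [y [a [My ->]]]].
    by exists (y + y'), (a + a'); split; [exact: MD | ring].
  by exists (b * y), (b * a); split; [exact: MM | ring].
have MJ x : M x -> J x by exists x, 0; rewrite mul0r addr0.
case: (Mmax J idJ MJ) => [JM | J1].
  by apply: Mu; apply/JM; exists 0, 1; rewrite mul1r add0r.
have [y [a [My y_au]]] := J1 1.
apply: Mv; have -> : v = v * y + a * (u * v) by rewrite -[LHS]mulr1 y_au; ring.
by apply: MD; apply: MM.
Qed.

Definition proper_ideal_above C J := [/\ is_ideal J, forall x, C x -> J x & ~ J 1].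

(* Adding C keeps the union a proper ideal above C for the empty chain. *)
Lemma chain_union_proper_ideal C (F : set (A -> Prop)) :
  is_ideal C -> ~ C 1 -> (forall J, F J -> proper_ideal_above C J) ->
  total_on F (fun J J' => forall x, J x -> J' x) ->
  proper_ideal_above C (fun x => C x \/ exists2 J, F J & J x).
Proof.
move=> [C0 [CD CM]] C1 FC Ftot.
have idD J x y : F J -> J x -> J y -> J (x + y) by move=> /FC [[_ [JD _]] _ _]; exact: JD.
have CJ J x : F J -> C x -> J x by move=> /FC [_ CJ _]; exact: CJ.
split=> [| x Cx | [// | [J /FC [_ _ J1] //]]]; last by left.
split; first by left.
split=> [x y [Cx | [J FJ Jx]] [Cy | [J' FJ' J'y]] | a x [Cx | [J FJ Jx]]].
- by left; exact: CD.
- by right; exists J' => //; apply: idD (CJ _ _ _ _) _.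
- by right; exists J => //; apply: idD _ (CJ _ _ _ _).
- have [JJ' | J'J] := Ftot J J' FJ FJ'.
    by right; exists J' => //; apply: idD (JJ' _ _) _.
  by right; exists J => //; apply: idD _ (J'J _ _).
- by left; exact: CM.
- by right; exists J => //; case: (FC J FJ) => [[_ [_ JM]] _ _]; exact: JM.
Qed.

Lemma exists_maximal_ideal_above C :
  is_ideal C -> ~ C 1 -> exists2 M, is_maximal_ideal M & forall x, C x -> M x.
Proof.
move=> idC C1.
pose T := {J | proper_ideal_above C J}.
pose R (s t : T) := `[< forall x, sval s x -> sval t x >].
have [| | | t tmax] := @ZL_preorder T (exist _ C (And3 idC (fun=> id) C1)) R.
- by move=> s; apply/asboolP.
- by move=> r s t /asboolP rs /asboolP st; apply/asboolP => x /rs /st.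
- move=> F Ftot.
  pose vF J := exists2 s, F s & sval s = J.
  have FC J : vF J -> proper_ideal_above C J by move=> [s _ <-]; exact: svalP.
  have Ftot' : total_on vF (fun J J' => forall x, J x -> J' x).
    move=> _ _ [s Fs <-] [s' Fs' <-].
    by have [/asboolP | /asboolP] := Ftot s s' Fs Fs'; [left | right].
  exists (exist _ _ (chain_union_proper_ideal idC C1 FC Ftot')) => s Fs.
  by apply/asboolP => x sx; right; exists (sval s) => //; exists s.
- case: (svalP t) => idt Ct t1; exists (sval t) => //.
  split=> //; split=> // J idJ tJ.
  have [J1 | J1] := pselect (J 1).
    by right=> x; rewrite -[x]mulr1; case: idJ => _ [_]; apply.
  have CJ : proper_ideal_above C J by split=> // x /Ct /tJ.
  have /tmax /asboolP /= Jt : R t (exist _ J CJ) by apply/asboolP.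
  by left=> x; split; [exact: Jt | exact: tJ].
Qed.

Lemma in_span_of_local L x :
  (forall M, is_maximal_ideal M -> exists2 u, ~ M u & in_span L (u * x)) ->
  in_span L x.
Proof.
move=> loc; pose C a := in_span L (a * x).
have idC : is_ideal C.
  split; first by rewrite /C mul0r; exact: in_span0.
  split=> [a b Ca Cb | a b Cb]; first by rewrite /C mulrDl; exact: in_spanD.
  by rewrite /C -mulrA; exact: in_spanMl.
have [C1 | C1] := pselect (C 1); first by rewrite /C mul1r in C1.
have [M maxM CM] := exists_maximal_ideal_above idC C1.
by have [u Mu /CM] := loc M maxM.
Qed.

End MaximalIdeals.

Section Localization.
Variables (A : comPzRingType) (m : A -> Prop).
Hypothesis maxm : is_maximal_ideal m.
Implicit Types (L : seq A) (p q : Defs.frac A) (I : A -> Prop).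

Definition loc_span L p := in_loc m p /\ exists2 u, ~ m u & in_span L (u * p.1).

Definition spans_at I L := forall x, I x -> exists2 u, ~ m u & in_span L (u * x).

Lemma loc_span_subset L L' p : {subset L <= L'} -> loc_span L p -> loc_span L' p.
Proof. by move=> sLL' [mp [u mu Lu]]; split=> //; exists u => //; exact: in_span_subset Lu. Qed.

Lemma loc_span_zero L : loc_span L (frac_zero A).
Proof.
have [_ [m1 _]] := maxm.
by split=> //; exists 1 => //=; rewrite mulr0; exact: in_span0.
Qed.

Lemma loc_span_add L p q : loc_span L p -> loc_span L q -> loc_span L (frac_add p q).
Proof.
move=> [mp [u mu Lu]] [mq [v mv Lv]].
split; first exact: maximal_ideal_mul_notin.
exists (u * v); first exact: maximal_ideal_mul_notin.
have -> : u * v * (frac_add p q).1 = v * q.2 * (u * p.1) + u * p.2 * (v * q.1).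
  by rewrite /=; ring.
by apply: in_spanD; apply: in_spanMl.
Qed.

Lemma frac_mulC p q : frac_mul p q = frac_mul q p.
Proof. by rewrite /frac_mul mulrC [p.2 * _]mulrC. Qed.

Lemma loc_span_mul L p q : loc_span L p -> in_loc m q -> loc_span L (frac_mul q p).
Proof.
move=> [mp [u mu Lu]] mq; split; first exact: maximal_ideal_mul_notin.
exists u => //; have -> : u * (frac_mul q p).1 = q.1 * (u * p.1) by rewrite /=; ring.
exact: in_spanMl.
Qed.

Lemma loc_span_big L n (F : 'I_n -> Defs.frac A) :
  (forall i, loc_span L (F i)) ->
  loc_span L (\big[@frac_add A/frac_zero A]_(i < n) F i).
Proof.
move=> LF; apply: (big_ind (loc_span L)) => //; first exact: loc_span_zero.
exact: loc_span_add.
Qed.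

Lemma loc_span_gen L a : a \in L -> loc_span L (a, 1).
Proof.
have [_ [m1 _]] := maxm.
by move=> La; split=> //; exists 1 => //=; rewrite mul1r; exact: in_span_mem.
Qed.

Lemma loc_span_eq L p q : in_loc m p -> frac_eq m p q -> loc_span L q -> loc_span L p.
Proof.
move=> mp [w [mw pq]] [mq [v mv Lv]]; split=> //.
exists (w * v * q.2); first by do 2 apply: maximal_ideal_mul_notin => //.
have wpq : w * (p.1 * q.2) = w * (q.1 * p.2) by apply/eqP; rewrite -subr_eq0 -mulrBr pq.
have -> : w * v * q.2 * p.1 = p.2 * w * (v * q.1).
  by transitivity (v * (w * (p.1 * q.2))); [ring | rewrite wpq; ring].
exact: in_spanMl.
Qed.

Lemma ext_ideal_loc_span I p :
  ext_ideal m I p -> exists2 L, (forall a, a \in L -> I a) & loc_span L p.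
Proof.
move=> [mp [n [a [r [Ia [mr pE]]]]]].
exists (codom a); first by move=> z /codomP [i ->].
apply: loc_span_eq pE _ => //; apply: loc_span_big => i.
by rewrite frac_mulC; apply: loc_span_mul => //; apply/loc_span_gen/codom_f.
Qed.

Lemma local_generators I :
  loc_finitely_generated m (ext_ideal m I) ->
  exists2 L, (forall a, a \in L -> I a) & spans_at I L.
Proof.
move=> [n [g [Ig gen]]].
have /fin_all_exists [Lg LgP] : forall i : 'I_n,
    exists L, (forall a, a \in L -> I a) /\ loc_span L (g i).
  by move=> i; have [L LI Lg] := ext_ideal_loc_span (Ig i); exists L.
pose L := flatten [seq Lg i | i <- enum 'I_n].
have LgL i : {subset Lg i <= L}.
  by move=> z Lz; apply/flatten_mapP; exists i; rewrite ?mem_enum.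
exists L; first by move=> z /flatten_mapP [i _]; case: (LgP i) => LI _; exact: LI.
have [_ [m1 _]] := maxm.
move=> x Ix.
have ext_x : ext_ideal m I (x, 1).
  split=> //; exists 1%N, (fun=> x), (fun=> frac_one A); split=> //; split=> //.
  by exists 1; split=> //; rewrite big_ord_recl big_ord0 /=; ring.
have [r [mr xE]] := gen _ ext_x.
have [_ [u mu Lu]] : loc_span L (x, 1).
  apply: loc_span_eq xE _ => //; apply: loc_span_big => i.
  by apply: loc_span_mul (mr i); apply: loc_span_subset (LgL i) _; case: (LgP i).
by exists u.
Qed.

End Localization.

Lemma local_generators_at (A : comPzRingType) (I Mi : A -> Prop) :
  locally_finitely_generated I ->
  exists2 L, (forall a, a \in L -> I a) & (is_maximal_ideal Mi -> spans_at Mi I L).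
Proof.
move=> Iloc; have [maxMi | notmax] := pselect (is_maximal_ideal Mi).
  by have [L LI LMi] := local_generators maxMi (Iloc Mi maxMi); exists L.
by exists [::] => // /notmax.
Qed.

Lemma B_regular_span_codom (A B : comPzRingType) (f : {rmorphism A -> B}) n
    (s : 'I_n -> A) (b : 'I_n -> B) :
  1 = \sum_(i < n) f (s i) * b i -> B_regular f (in_span (codom s)).
Proof.
move=> one_eq y; exists n, s, (fun i => b i * y); split.
  by move=> i; apply/in_span_mem/codom_f.
by rewrite -[y in LHS]mul1r one_eq mulr_suml; apply: eq_bigr => i _; rewrite mulrA.
Qed.

Theorem proposition3p4 (A B : comPzRingType) (f : {rmorphism A -> B})
  (f_inj : injective f) (Hfc : finite_character f)
  (I : A -> Prop) (HI : is_ideal I) (Hreg : B_regular f I)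
  (Hloc : locally_finitely_generated I) :
  finitely_generated I.
Proof.
have [n [s [b [Is one_eq]]]] := Hreg 1.
have [k [Ms MsP]] := Hfc _ (is_ideal_span _) (B_regular_span_codom one_eq).
have /fin_all_exists [Lj LjP] : forall j : 'I_k,
    exists L, (forall a, a \in L -> I a) /\ (is_maximal_ideal (Ms j) -> spans_at (Ms j) I L).
  by move=> j; have [L LI LM] := local_generators_at (Ms j) Hloc; exists L.
pose L := codom s ++ flatten [seq Lj j | j <- enum 'I_k].
apply: (@span_finitely_generated _ _ L) => [a | x Ix].
  rewrite mem_cat => /orP [/codomP [i ->] | /flatten_mapP [j _]]; first exact: Is.
  by case: (LjP j) => LI _; exact: LI.
apply: in_span_of_local => M maxM.
have sL : {subset codom s <= L} by move=> z sz; rewrite mem_cat sz.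
have [sM | /existsNP [y /not_implyP [sy My]]] :=
  pselect (forall y, in_span (codom s) y -> M y); last first.
  by exists y => //; rewrite mulrC; apply/in_spanMl/(in_span_subset sL).
have [j MMs] := MsP M maxM sM.
have {MMs}MMs : M = Ms j by apply/funext => z; exact/propext/MMs.
rewrite {M sM}MMs in maxM *.
have [u Mu Lu] := (LjP j).2 maxM x Ix.
exists u => //; apply: in_span_subset Lu => z Lz.
by rewrite mem_cat; apply/orP; right; apply/flatten_mapP; exists j; rewrite ?mem_enum.
Qed.
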